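(* Let $1\le p<\infty$ and let $X$ be an infinite dimensional Banach space. Then $\ell_p^+(X) - \ell_p^w(X)$ is maximal spaceable in $\ell_p^+(X)$ endowed with its locally convex topology.
   Context: $\mathbb{K}=\mathbb{R}$ or $\mathbb{C}$. For $1\le p<\infty$, $\ell_p^+(X):=\bigcap_{q>p}\ell_q(X)$, where $\ell_q(X)$ is the space of $X$-valued sequences with $\|(x_n)\|_q=(\sum_n\|x_n\|^q)^{1/q}<\infty$, endowed with the locally convex (Fréchet) topology generated by the family of norms $(\|\cdot\|_q)_{q>p}$. $\ell_p^w(X)$ is the space of weakly $p$-summable sequences ($(\varphi(x_n))_n\in\ell_p$ for every $\varphi\in X'$). For sets $A,B$ of sequences, $A-B:=A\setminus B$. A subset $A$ of a topological vector space $V$ is maximal spaceable if $A\cup\{0\}$ contains a closed linear subspace of $V$ of dimension $\dim V$. *)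

From Stdlib Require Import Reals List.
Open Scope R_scope.
Set Implicit Arguments.

(** Scalar fields: K = R or K = C (C modelled as R*R). *)
Record Scal := {
  sc :> Type;
  s0 : sc; s1 : sc;
  sadd : sc -> sc -> sc; smul : sc -> sc -> sc; sopp : sc -> sc;
  sabs : sc -> R }.

Definition RScal : Scal := @Build_Scal R 0 1 Rplus Rmult Ropp Rabs.

Definition Cx := (R * R)%type.
Definition CScal : Scal :=
  @Build_Scal Cx (0,0) (1,0)
    (fun a b => (fst a + fst b, snd a + snd b))
    (fun a b => (fst a * fst b - snd a * snd b, fst a * snd b + snd a * fst b))
    (fun a => (- fst a, - snd a))
    (fun a => sqrt (fst a ^ 2 + snd a ^ 2)).

Definition scalar_field (k : bool) : Scal := if k then CScal else RScal.

Record Banach (K : Scal) := {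
  vc :> Type;
  v0 : vc;
  vadd : vc -> vc -> vc;
  vopp : vc -> vc;
  vscal : K -> vc -> vc;
  vnorm : vc -> R;
  vadd_assoc : forall x y z, vadd x (vadd y z) = vadd (vadd x y) z;
  vadd_comm : forall x y, vadd x y = vadd y x;
  vadd_0 : forall x, vadd x v0 = x;
  vadd_opp : forall x, vadd x (vopp x) = v0;
  vscal_1 : forall x, vscal (s1 K) x = x;
  vscal_assoc : forall a b x, vscal a (vscal b x) = vscal (smul K a b) x;
  vscal_distr_v : forall a x y, vscal a (vadd x y) = vadd (vscal a x) (vscal a y);
  vscal_distr_s : forall a b x, vscal (sadd K a b) x = vadd (vscal a x) (vscal b x);
  vnorm_nonneg : forall x, 0 <= vnorm x;
  vnorm_eq0 : forall x, vnorm x = 0 -> x = v0;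
  vnorm_scal : forall a x, vnorm (vscal a x) = sabs K a * vnorm x;
  vnorm_triangle : forall x y, vnorm (vadd x y) <= vnorm x + vnorm y;
  vcomplete : forall u : nat -> vc,
    (forall eps, 0 < eps -> exists N, forall m n, (N <= m)%nat -> (N <= n)%nat ->
        vnorm (vadd (u m) (vopp (u n))) < eps) ->
    exists l, forall eps, 0 < eps -> exists N, forall n, (N <= n)%nat ->
        vnorm (vadd (u n) (vopp l)) < eps }.

Arguments v0 {K} b : rename.
Arguments vadd {K} [b] : rename.
Arguments vopp {K} [b] : rename.
Arguments vscal {K} [b] : rename.
Arguments vnorm {K} [b] : rename.

Section Defs.
Context {K : Scal} {X : Banach K}.

Definition vsub (x y : X) : X := vadd x (vopp y).

Definition lin_comb (l : list (K * X)) : X :=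
  fold_right (fun pr acc => vadd (vscal (fst pr) (snd pr)) acc) (v0 X) l.

Definition infinite_dim : Prop :=
  ~ exists l : list X, forall x : X, exists lc : list (K * X),
      map snd lc = l /\ x = lin_comb lc.

Definition rpow (x q : R) : R := if Rlt_dec 0 x then Rpower x q else 0.

Fixpoint psum (f : nat -> R) (N : nat) : R :=
  match N with O => 0 | S n => psum f n + f n end.

Definition summable (f : nat -> R) : Prop := exists M, forall N, psum f N <= M.

Definition in_lq (q : R) (x : nat -> X) : Prop :=
  summable (fun n => rpow (vnorm (x n)) q).

Definition lpplus (p : R) (x : nat -> X) : Prop := forall q, p < q -> in_lq q x.

Definition linear_fun (phi : X -> K) : Prop :=
  (forall x y, phi (vadd x y) = sadd K (phi x) (phi y)) /\
  (forall a x, phi (vscal a x) = smul K a (phi x)).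

Definition continuous_fun (phi : X -> K) : Prop :=
  forall x eps, 0 < eps -> exists delta, 0 < delta /\
    forall y, vnorm (vsub y x) < delta -> sabs K (sadd K (phi y) (sopp K (phi x))) < eps.

Definition weakly_summable (p : R) (x : nat -> X) : Prop :=
  forall phi : X -> K, linear_fun phi -> continuous_fun phi ->
    summable (fun n => rpow (sabs K (phi (x n))) p).

Definition zero_seq : nat -> X := fun _ => v0 X.
Definition add_seq (x y : nat -> X) : nat -> X := fun n => vadd (x n) (y n).
Definition scal_seq (a : K) (x : nat -> X) : nat -> X := fun n => vscal a (x n).
Definition seq_lin_comb (l : list (K * (nat -> X))) : nat -> X :=
  fun n => lin_comb (map (fun pr => (fst pr, snd pr n)) l).

Definition subspace (S : (nat -> X) -> Prop) : Prop :=
  S zero_seq /\ (forall x y, S x -> S y -> S (add_seq x y)) /\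
  (forall a x, S x -> S (scal_seq a x)).

Definition lin_indep (B : (nat -> X) -> Prop) : Prop :=
  forall l : list (K * (nat -> X)),
    NoDup (map snd l) -> Forall (fun pr => B (snd pr)) l ->
    seq_lin_comb l = zero_seq -> Forall (fun pr => fst pr = s0 K) l.

Definition hamel_basis (B S : (nat -> X) -> Prop) : Prop :=
  (forall b, B b -> S b) /\ lin_indep B /\
  (forall s, S s -> exists l, Forall (fun pr => B (snd pr)) l /\ s = seq_lin_comb l).

Definition same_dim (S T : (nat -> X) -> Prop) : Prop :=
  exists (B B' : (nat -> X) -> Prop) (f : (nat -> X) -> (nat -> X)),
    hamel_basis B S /\ hamel_basis B' T /\
    (forall b, B b -> B' (f b)) /\
    (forall b1 b2, B b1 -> B b2 -> f b1 = f b2 -> b1 = b2) /\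
    (forall b', B' b' -> exists b, B b /\ f b = b').

(** Locally convex topology on l_p^+(X) generated by the norms ||.||_q, q > p:
    U is open iff around each point it contains a finite intersection of
    (closed) balls { y | sum_n ||y_n - x_n||^q <= eps }, q > p. *)
Definition lpplus_open (p : R) (U : (nat -> X) -> Prop) : Prop :=
  (forall x, U x -> lpplus p x) /\
  forall x, U x -> exists (qs : list R) (eps : R),
    Forall (fun q => p < q) qs /\ 0 < eps /\
    forall y, lpplus p y ->
      Forall (fun q => forall N, psum (fun n => rpow (vnorm (vsub (y n) (x n))) q) N <= eps) qs ->
      U y.

Definition lpplus_closed (p : R) (C : (nat -> X) -> Prop) : Prop :=
  (forall x, C x -> lpplus p x) /\ lpplus_open p (fun x => lpplus p x /\ ~ C x).

Definition maximal_spaceable (p : R) (A : (nat -> X) -> Prop) : Prop :=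
  exists W : (nat -> X) -> Prop,
    subspace W /\ lpplus_closed p W /\
    (forall x, W x -> A x \/ x = zero_seq) /\
    same_dim W (lpplus p).

End Defs.
Arguments infinite_dim {K} X.
Arguments zero_seq {K} {X}.

From Stdlib Require Import Reals List.
From Stdlib Require Import Classical ClassicalEpsilon FunctionalExtensionality Lra Lia Cantor.
From mathcomp Require classical_sets.
Open Scope R_scope.

(** Index the coordinates of a sequence by pairs (n, m) through the Cantor
    pairing and put c_m = (m+1)^(-1/p).  The map
        T x = (c_m x_n)_(n,m)
    is linear and has the left inverse S y = (y_(n,0))_n.  Since (c_m) lies in
    l_q for every q > p (comparison with a zeta series), T maps l_p^+(X) into
    itself, and its image W is a subspace of l_p^+(X) which
    - is closed: W is cut out by the coordinate relations y_(n,m) = c_m y_(n,0),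
      and each ||.||_q-ball controls every coordinate;
    - meets l_p^w(X) only in 0: if z <> 0, pick z_n <> 0 and (Hahn-Banach) a
      continuous functional phi with phi z_n <> 0; then
      sum_m |phi (c_m z_n)|^p = |phi z_n|^p sum_m 1/(m+1) diverges;
    - has the dimension of l_p^+(X): T maps a Hamel basis of l_p^+(X) (Zorn)
      bijectively onto a Hamel basis of W. *)

Lemma zorn_sets (T : Type) (P : (T -> Prop) -> Prop) :
  (forall F : (T -> Prop) -> Prop, (forall A, F A -> P A) ->
    (forall A B, F A -> F B -> (forall z, A z -> B z) \/ (forall z, B z -> A z)) ->
    P (fun z => exists2 A, F A & A z)) ->
  exists A, P A /\ forall B, (forall z, A z -> B z) -> P B -> forall z, B z -> A z.
Proof.
intros Hchain.
destruct (@classical_sets.Zorn_bigcup T P Hchain) as [A [PA Amax]].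
exists A. split; [exact PA|]. intros B AB PB z Bz.
apply NNPP; intro nAz. apply (Amax B); [split; [exact AB|] | exact PB].
intro BA. exact (nAz (BA z Bz)).
Qed.

(** * The Hahn-Banach theorem for real seminormed spaces

    A norming functional is obtained as a maximal "dominated graph": a set G of
    pairs (x, a) closed under sums and real multiples, with a <= ||x||. *)
Section HahnBanach.
Variable V : Type.
Variables (zero : V) (add : V -> V -> V) (opp : V -> V) (scal : R -> V -> V) (nrm : V -> R).
Hypothesis add_assoc : forall x y z, add x (add y z) = add (add x y) z.
Hypothesis add_comm : forall x y, add x y = add y x.
Hypothesis add_0 : forall x, add x zero = x.
Hypothesis add_opp : forall x, add x (opp x) = zero.
Hypothesis scal_1 : forall x, scal 1 x = x.
Hypothesis scal_assoc : forall a b x, scal a (scal b x) = scal (a * b) x.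
Hypothesis scal_distr_v : forall a x y, scal a (add x y) = add (scal a x) (scal a y).
Hypothesis scal_distr_s : forall a b x, scal (a + b) x = add (scal a x) (scal b x).
Hypothesis nrm_scal : forall a x, nrm (scal a x) = Rabs a * nrm x.
Hypothesis nrm_triangle : forall x y, nrm (add x y) <= nrm x + nrm y.
Hypothesis nrm_nonneg : forall x, 0 <= nrm x.

Lemma add_0l x : add zero x = x.
Proof. rewrite add_comm; auto. Qed.

Lemma scal_0 x : scal 0 x = zero.
Proof.
assert (E : add (add (scal 0 x) (scal 0 x)) (opp (scal 0 x)) = scal 0 x).
{ rewrite <- add_assoc, add_opp, add_0; auto. }
rewrite <- scal_distr_s, Rplus_0_r, add_opp in E. auto.
Qed.

Lemma opp_is_scal x : opp x = scal (-1) x.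
Proof.
assert (E : add x (scal (-1) x) = zero).
{ rewrite <- (scal_1 x) at 1. rewrite <- scal_distr_s, Rplus_opp_r. apply scal_0. }
rewrite <- (add_0 (opp x)), <- E, add_assoc, (add_comm (opp x) x), add_opp. apply add_0l.
Qed.

Lemma nrm_0 : nrm zero = 0.
Proof. rewrite <- (scal_0 zero), nrm_scal, Rabs_R0. ring. Qed.

Definition dominated_graph (G : V * R -> Prop) : Prop :=
  (forall x a y b, G (x, a) -> G (y, b) -> G (add x y, a + b)) /\
  (forall r x a, G (x, a) -> G (scal r x, r * a)) /\
  (forall x a, G (x, a) -> a <= nrm x).

Lemma dominated_graph_functional G x a b :
  dominated_graph G -> G (x, a) -> G (x, b) -> a = b.
Proof.
intros [Gadd [Gscal Gdom]] Ha Hb.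
assert (H1 := Gdom _ _ (Gadd _ _ _ _ Ha (Gscal (-1) _ _ Hb))).
assert (H2 := Gdom _ _ (Gadd _ _ _ _ Hb (Gscal (-1) _ _ Ha))).
rewrite <- opp_is_scal, add_opp, nrm_0 in H1, H2. lra.
Qed.

Lemma dominated_graph_eqv (G H : V * R -> Prop) :
  dominated_graph G -> (forall z, H z <-> G z) -> dominated_graph H.
Proof.
intros [Gadd [Gscal Gdom]] HG. split; [|split].
- intros x a y b Hx Hy. apply HG. apply Gadd; apply HG; auto.
- intros r x a Hx. apply HG. apply Gscal; apply HG; auto.
- intros x a Hx. apply Gdom; apply HG; auto.
Qed.

Variable v : V.

Definition line_graph (z : V * R) : Prop := exists t, z = (scal t v, t * nrm v).

Lemma line_graph_dominated : dominated_graph line_graph.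
Proof.
split; [|split].
- intros x a y b [t Ht] [s Hs]. injection Ht; injection Hs; intros; subst.
  exists (t + s). rewrite scal_distr_s. f_equal. ring.
- intros r x a [t Ht]. injection Ht; intros; subst.
  exists (r * t). rewrite scal_assoc. f_equal. ring.
- intros x a [t Ht]. injection Ht; intros; subst. rewrite nrm_scal.
  apply Rmult_le_compat_r; [apply nrm_nonneg | apply Rle_abs].
Qed.

(** Zorn is applied to the sets G with G u line_graph dominated; taking the
    union with the line avoids the empty chain, whose union is empty. *)
Definition extends_line (G : V * R -> Prop) : Prop :=
  dominated_graph (fun z => G z \/ line_graph z).

Lemma extends_line_chain (F : (V * R -> Prop) -> Prop) :
  (forall A, F A -> extends_line A) ->
  (forall A B, F A -> F B -> (forall z, A z -> B z) \/ (forall z, B z -> A z)) ->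
  extends_line (fun z => exists2 A, F A & A z).
Proof.
intros HF Hchain.
set (U := fun z => exists2 A, F A & A z).
assert (common : forall z1 z2, U z1 \/ line_graph z1 -> U z2 \/ line_graph z2 ->
   exists A0, extends_line A0 /\ (forall z, A0 z -> U z) /\
     (A0 z1 \/ line_graph z1) /\ (A0 z2 \/ line_graph z2)).
{ assert (member : forall A, F A -> forall z, A z -> U z) by (intros A FA z Az; exists A; auto).
  intros z1 z2 [[A1 FA1 A1z]|L1] [[A2 FA2 A2z]|L2].
  - destruct (Hchain A1 A2 FA1 FA2) as [s|s].
    + exists A2. split; [|split; [|split]]; eauto using member, HF.
    + exists A1. split; [|split; [|split]]; eauto using member, HF.
  - exists A1. split; [|split; [|split]]; eauto using member, HF.
  - exists A2. split; [|split; [|split]]; eauto using member, HF.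
  - exists (fun _ => False). split; [|split; [intros z []|auto]].
    apply (dominated_graph_eqv _ _ line_graph_dominated). tauto. }
split; [|split].
- intros x a y b H1 H2. destruct (common _ _ H1 H2) as [A0 [[Aadd _] [sub [k1 k2]]]].
  destruct (Aadd _ _ _ _ k1 k2); [left; apply sub | right]; auto.
- intros r x a H1. destruct (common _ _ H1 H1) as [A0 [[_ [Ascal _]] [sub [k1 _]]]].
  destruct (Ascal r _ _ k1); [left; apply sub | right]; auto.
- intros x a H1. destruct (common _ _ H1 H1) as [A0 [[_ [_ Adom]] [_ [k1 _]]]].
  exact (Adom _ _ k1).
Qed.

Section OneStep.
Variables (G : V * R -> Prop) (z : V).
Hypothesis G_dom : dominated_graph G.

Lemma extension_value : exists c, forall y b, G (y, b) ->
  b - nrm (add y (opp z)) <= c /\ c <= nrm (add y z) - b.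
Proof.
destruct G_dom as [Gadd [Gscal Gdom]].
set (A := fun r => exists y b, G (y, b) /\ r = b - nrm (add y (opp z))).
assert (sep : forall x a y b, G (x, a) -> G (y, b) ->
  a - nrm (add x (opp z)) <= nrm (add y z) - b).
{ intros x a y b Gx Gy.
  assert (a + b <= nrm (add x y)) by (apply Gdom; auto).
  assert (nrm (add x y) <= nrm (add x (opp z)) + nrm (add y z)).
  { replace (add x y) with (add (add x (opp z)) (add y z)); [apply nrm_triangle|].
    rewrite (add_comm y z), !add_assoc, <- (add_assoc x), (add_comm (opp z) z), add_opp, add_0.
    auto. }
  lra. }
destruct (classic (exists y b, G (y, b))) as [[y0 [b0 G0]]|noG].
- assert (Abnd : bound A).
  { exists (nrm (add y0 z) - b0). intros r [y [b [Gy ->]]]. apply sep; auto. }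
  destruct (completeness A Abnd) as [c [cub club]].
  { exists (b0 - nrm (add y0 (opp z))). exists y0, b0. auto. }
  exists c. intros y b Gy. split.
  + apply cub. exists y, b. auto.
  + apply club. intros r [x [a [Gx ->]]]. apply sep; auto.
- exists 0. intros y b Gy. exfalso. apply noG. exists y, b. auto.
Qed.

Lemma one_step_extension :
  exists c, dominated_graph (fun w => exists x a t, G (x, a) /\ w = (add x (scal t z), a + t * c)).
Proof.
destruct extension_value as [c Hc]. exists c.
destruct G_dom as [Gadd [Gscal Gdom]].
split; [|split].
- intros x1 a1 x2 a2 [y [b [t [Gy E1]]]] [y' [b' [t' [Gy' E2]]]].
  injection E1; injection E2; intros; subst.
  exists (add y y'), (b + b'), (t + t'). split; [apply Gadd; auto|].
  rewrite scal_distr_s, !add_assoc, <- (add_assoc y (scal t z)), (add_comm (scal t z) y'),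
    !add_assoc. f_equal. ring.
- intros r x a [y [b [t [Gy E1]]]]. injection E1; intros; subst.
  exists (scal r y), (r * b), (r * t). split; [apply Gscal; auto|].
  rewrite scal_distr_v, scal_assoc. f_equal. ring.
- intros x a [y [b [t [Gy E1]]]]. injection E1; intros; subst.
  destruct (Rtotal_order t 0) as [tneg|[t0|tpos]].
  + (* y + t z = |t| (y/|t| - z) *)
    set (s := - t). assert (spos : 0 < s) by (unfold s; lra).
    destruct (Hc _ _ (Gscal (/ s) _ _ Gy)) as [H _].
    assert (E : add y (scal t z) = scal s (add (scal (/ s) y) (opp z))).
    { rewrite scal_distr_v, scal_assoc, Rinv_r, scal_1, opp_is_scal, scal_assoc by lra.
      do 3 f_equal. unfold s; ring. }
    rewrite E, nrm_scal, Rabs_right by lra.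
    apply Rmult_le_compat_l with (r := s) in H; [|lra].
    replace (s * (/ s * b - nrm (add (scal (/ s) y) (opp z)))) with
      (b - s * nrm (add (scal (/ s) y) (opp z))) in H by (field; lra).
    unfold s in *. lra.
  + subst. rewrite scal_0, add_0, Rmult_0_l, Rplus_0_r. apply Gdom; auto.
  + (* y + t z = t (y/t + z) *)
    destruct (Hc _ _ (Gscal (/ t) _ _ Gy)) as [_ H].
    assert (E : add y (scal t z) = scal t (add (scal (/ t) y) z)).
    { rewrite scal_distr_v, scal_assoc, Rinv_r, scal_1 by lra. auto. }
    rewrite E, nrm_scal, Rabs_right by lra.
    apply Rmult_le_compat_l with (r := t) in H; [|lra].
    replace (t * (nrm (add (scal (/ t) y) z) - / t * b)) with
      (t * nrm (add (scal (/ t) y) z) - b) in H by (field; lra).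
    lra.
Qed.
End OneStep.

Lemma maximal_graph_total (M : V * R -> Prop) :
  extends_line M ->
  (forall B, (forall w, M w -> B w) -> extends_line B -> forall w, B w -> M w) ->
  forall x, exists a, M (x, a) \/ line_graph (x, a).
Proof.
intros PM Mmax x. apply NNPP. intro nx.
set (G := fun w => M w \/ line_graph w).
assert (Gx : forall a, ~ G (x, a)) by (intros a Ha; apply nx; exists a; auto).
destruct (one_step_extension G x PM) as [c Hc].
set (H := fun w => exists y a t, G (y, a) /\ w = (add y (scal t x), a + t * c)).
assert (GH : forall w, G w -> H w).
{ intros [y a] Gw. exists y, a, 0. rewrite scal_0, add_0, Rmult_0_l, Rplus_0_r. auto. }
assert (HM : forall w, H w -> M w).
{ apply Mmax; [intros w Mw; apply GH; left; auto|].
  apply (dominated_graph_eqv _ _ Hc). intro w.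
  split; [intros [Hw|Lw]; [exact Hw | apply GH; right; exact Lw] | now left]. }
apply (Gx c). left. apply HM. exists zero, 0, 1. split.
- right. exists 0. rewrite scal_0, Rmult_0_l. auto.
- rewrite add_0l, scal_1. f_equal. ring.
Qed.

Theorem hahn_banach_norming :
  exists f : V -> R, (forall x y, f (add x y) = f x + f y) /\
    (forall r x, f (scal r x) = r * f x) /\ (forall x, Rabs (f x) <= nrm x) /\ f v = nrm v.
Proof.
destruct (zorn_sets (V * R) extends_line extends_line_chain) as [M [PM Mmax]].
set (G := fun w => M w \/ line_graph w).
assert (Gfun : forall x a b, G (x, a) -> G (x, b) -> a = b)
  by (intros; apply (dominated_graph_functional G x); auto).
assert (total := maximal_graph_total M PM Mmax).
destruct PM as [Gadd [Gscal Gdom]].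
set (f := fun x => proj1_sig (constructive_indefinite_description _ (total x))).
assert (fG : forall x, G (x, f x))
  by (intro y; exact (proj2_sig (constructive_indefinite_description _ (total y)))).
exists f. split; [|split; [|split]].
- intros x y. apply Gfun with (add x y); [apply fG | exact (Gadd _ _ _ _ (fG x) (fG y))].
- intros r x. apply Gfun with (scal r x); [apply fG | exact (Gscal r _ _ (fG x))].
- intro x. apply Rabs_le. split.
  + assert (H := Gdom _ _ (fG (scal (-1) x))).
    rewrite (Gfun _ _ _ (fG (scal (-1) x)) (Gscal (-1) _ _ (fG x))), nrm_scal in H.
    replace (Rabs (-1)) with 1 in H by (rewrite Rabs_left; lra). lra.
  + exact (Gdom _ _ (fG x)).
- apply Gfun with v; [apply fG|]. right. exists 1. rewrite scal_1, Rmult_1_l. auto.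
Qed.
End HahnBanach.

Definition of_real (k : bool) : R -> scalar_field k :=
  match k as b return R -> scalar_field b with
  | true => fun r => (r, 0)
  | false => fun r => r
  end.

Section ScalarField.
Variable k : bool.
Notation K := (scalar_field k).

Lemma sf_add_00 : sadd K (s0 K) (s0 K) = s0 K.
Proof. destruct k; simpl; [f_equal|]; ring. Qed.

Lemma sf_add_opp_1 : sadd K (s1 K) (sopp K (s1 K)) = s0 K.
Proof. destruct k; simpl; [f_equal|]; ring. Qed.

Lemma sf_mul_comm (a b : K) : smul K a b = smul K b a.
Proof. destruct k; simpl in *; [destruct a, b; simpl; f_equal|]; ring. Qed.

Lemma sf_opp_mul (a : K) : sopp K a = smul K (sopp K (s1 K)) a.
Proof. destruct k; simpl in *; [destruct a; simpl; f_equal|]; ring. Qed.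

Lemma sf_inv (a : K) : a <> s0 K -> exists ai, smul K ai a = s1 K.
Proof.
destruct k; simpl in *.
- destruct a as [x y]. intro H. assert (x * x + y * y <> 0).
  { intro E. apply H. assert (x = 0) by nra. assert (y = 0) by nra. subst; auto. }
  exists (x / (x * x + y * y), - y / (x * x + y * y)). simpl. f_equal; field; auto.
- intro H. exists (/ a). field. auto.
Qed.

Lemma sf_abs_0 : sabs K (s0 K) = 0.
Proof.
destruct k; simpl; [|apply Rabs_R0].
match goal with |- sqrt ?a = 0 => replace a with 0 by ring end. apply sqrt_0.
Qed.

Lemma sf_abs_nonneg (a : K) : 0 <= sabs K a.
Proof. destruct k; simpl; [apply sqrt_pos | apply Rabs_pos]. Qed.

Lemma sf_abs_mul (a b : K) : sabs K (smul K a b) = sabs K a * sabs K b.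
Proof.
destruct k; simpl in *; [|apply Rabs_mult].
destruct a as [x y], b as [u w]. simpl. rewrite <- sqrt_mult by nra. f_equal. ring.
Qed.

Lemma sf_abs_of_real r : sabs K (of_real k r) = Rabs r.
Proof.
destruct k; simpl; [|auto].
match goal with |- sqrt ?a = _ => replace a with (Rsqr r) by (unfold Rsqr; ring) end.
apply sqrt_Rsqr_abs.
Qed.

Lemma sf_abs_opp_1 : sabs K (sopp K (s1 K)) = 1.
Proof.
destruct k; simpl; [|rewrite Rabs_Ropp; apply Rabs_R1].
match goal with |- sqrt ?a = 1 => replace a with 1 by ring end. apply sqrt_1.
Qed.

Lemma sf_of_real_1 : of_real k 1 = s1 K.
Proof. destruct k; reflexivity. Qed.
End ScalarField.

Section BanachAlgebra.
Context {k : bool} (X : Banach (scalar_field k)).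
Notation K := (scalar_field k).

Lemma vadd_0l (x : X) : vadd (v0 X) x = x.
Proof. rewrite vadd_comm; apply vadd_0. Qed.

Lemma vadd_idem (u : X) : vadd u u = u -> u = v0 X.
Proof.
intro H. assert (E : vadd (vadd u u) (vopp u) = u) by (rewrite <- vadd_assoc, vadd_opp, vadd_0; auto).
rewrite H, vadd_opp in E. auto.
Qed.

Lemma vscal_0 (x : X) : vscal (s0 K) x = v0 X.
Proof. apply vadd_idem. rewrite <- vscal_distr_s, sf_add_00; auto. Qed.

Lemma vscal_v0 a : vscal a (v0 X) = v0 X.
Proof. apply vadd_idem. rewrite <- vscal_distr_v, vadd_0; auto. Qed.

Lemma vopp_unique (x w : X) : vadd x w = v0 X -> w = vopp x.
Proof.
intro H. rewrite <- (vadd_0 _ w), <- (vadd_opp _ x), vadd_assoc, (vadd_comm _ w x), H, vadd_0l. auto.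
Qed.

Lemma vopp_scal (x : X) : vopp x = vscal (sopp K (s1 K)) x.
Proof.
symmetry. apply vopp_unique. rewrite <- (vscal_1 _ x) at 1.
rewrite <- vscal_distr_s, sf_add_opp_1. apply vscal_0.
Qed.

Lemma vopp_opp (x : X) : vopp (vopp x) = x.
Proof. symmetry. apply vopp_unique. rewrite vadd_comm. apply vadd_opp. Qed.

Lemma vopp_add (x y : X) : vopp (vadd x y) = vadd (vopp x) (vopp y).
Proof.
symmetry. apply vopp_unique.
rewrite (vadd_assoc X (vadd x y) (vopp x) (vopp y)), <- (vadd_assoc X x y (vopp x)),
  (vadd_comm X y (vopp x)), (vadd_assoc X x (vopp x) y), vadd_opp, vadd_0l.
apply vadd_opp.
Qed.

Lemma vscal_opp c (x : X) : vscal c (vopp x) = vopp (vscal c x).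
Proof. rewrite !vopp_scal, !vscal_assoc. f_equal. apply sf_mul_comm. Qed.

Lemma vnorm_0 : vnorm (v0 X) = 0.
Proof. rewrite <- (vscal_0 (v0 X)), vnorm_scal, sf_abs_0. ring. Qed.

Lemma vnorm_opp (x : X) : vnorm (vopp x) = vnorm x.
Proof. rewrite vopp_scal, vnorm_scal, sf_abs_opp_1. ring. Qed.

Lemma vnorm_sub_eq0 (a b : X) : vnorm (vsub a b) = 0 -> a = b.
Proof.
intro H. apply vnorm_eq0 in H. unfold vsub in H.
rewrite <- (vopp_opp a), <- (vopp_opp b). f_equal. symmetry. apply vopp_unique. auto.
Qed.

(** How far x1 is from c x0, given y1 = c y0 near x1 and y0 near x0. *)
Lemma vnorm_defect_le c (x0 x1 y0 : X) :
  vnorm (vsub x1 (vscal c x0)) <= vnorm (vsub (vscal c y0) x1) + sabs K c * vnorm (vsub y0 x0).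
Proof.
assert (E : vsub x1 (vscal c x0) = vadd (vopp (vsub (vscal c y0) x1)) (vscal c (vsub y0 x0))).
{ unfold vsub. rewrite vopp_add, vopp_opp, vscal_distr_v, vscal_opp.
  rewrite (vadd_comm _ (vopp (vscal c y0)) x1), <- vadd_assoc,
    (vadd_assoc _ (vopp (vscal c y0)) (vscal c y0)), (vadd_comm _ (vopp _) (vscal c y0)),
    vadd_opp, vadd_0l. auto. }
rewrite E, <- vnorm_scal, <- (vnorm_opp (vsub (vscal c y0) x1)). apply vnorm_triangle.
Qed.

Lemma bounded_linear_continuous (phi : X -> K) (C : R) :
  linear_fun phi -> (forall x, sabs K (phi x) <= C * vnorm x) -> continuous_fun phi.
Proof.
intros [phi_add phi_scal] Hb x eps Heps.
assert (HC : 0 < Rabs C + 1) by (assert (0 <= Rabs C) by apply Rabs_pos; lra).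
exists (eps / (Rabs C + 1)). split; [apply Rdiv_lt_0_compat; lra|]. intros y Hy.
assert (E : sadd K (phi y) (sopp K (phi x)) = phi (vsub y x)).
{ unfold vsub. rewrite phi_add, vopp_scal, phi_scal, <- sf_opp_mul. auto. }
rewrite E. apply Rle_lt_trans with ((Rabs C + 1) * vnorm (vsub y x)).
- apply Rle_trans with (C * vnorm (vsub y x)); [apply Hb|].
  apply Rmult_le_compat_r; [apply vnorm_nonneg|]. assert (C <= Rabs C) by apply Rle_abs. lra.
- apply Rmult_lt_reg_r with (/ (Rabs C + 1)); [apply Rinv_0_lt_compat; lra|].
  replace ((Rabs C + 1) * vnorm (vsub y x) * / (Rabs C + 1)) with (vnorm (vsub y x)) by (field; lra).
  exact Hy.
Qed.
End BanachAlgebra.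

(** * Continuous functionals separate the points of a Banach space *)

Lemma real_separating_functional (X : Banach (scalar_field false)) (v : X) :
  v <> v0 X -> exists phi : X -> scalar_field false,
    linear_fun phi /\ continuous_fun phi /\ 0 < sabs _ (phi v).
Proof.
intro nv.
destruct (@hahn_banach_norming X (v0 X) (@vadd _ X) (@vopp _ X) (@vscal _ X) (@vnorm _ X)
  (vadd_assoc X) (vadd_comm X) (vadd_0 X) (vadd_opp X) (vscal_1 X) (vscal_assoc X)
  (vscal_distr_v X) (vscal_distr_s X) (vnorm_scal X) (vnorm_triangle X) (vnorm_nonneg X) v)
  as [f [f_add [f_scal [f_bound f_v]]]].
assert (lin : linear_fun (f : X -> scalar_field false)) by (split; [exact f_add | exact f_scal]).
exists f. split; [exact lin|split].
- apply (bounded_linear_continuous X f 1 lin). intro x. simpl. rewrite Rmult_1_l. apply f_bound.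
- simpl. rewrite f_v. destruct (vnorm_nonneg _ v) as [H|H]; [rewrite Rabs_right; lra|].
  exfalso. apply nv, vnorm_eq0. auto.
Qed.

Lemma complex_abs_le (a b : R) : sabs (scalar_field true) (a, b) <= Rabs a + Rabs b.
Proof.
simpl. rewrite <- (sqrt_pow2 (Rabs a + Rabs b)) by (apply Rplus_le_le_0_compat; apply Rabs_pos).
apply sqrt_le_1_alt.
assert (0 <= Rabs a * Rabs b) by (apply Rmult_le_pos; apply Rabs_pos).
replace (a * (a * 1) + b * (b * 1)) with (Rabs a * Rabs a + Rabs b * Rabs b); [nra|].
rewrite <- !Rabs_mult, !Rabs_right by nra. ring.
Qed.

Lemma complex_abs_pos (a b : R) : 0 < a -> 0 < sabs (scalar_field true) (a, b).
Proof. intro Ha. simpl. apply sqrt_lt_R0. nra. Qed.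

(** In the complex case, Hahn-Banach is applied to the underlying real space
    and the real functional f yields phi x = f x - i f (i x). *)
Section ComplexFunctional.
Variable X : Banach (scalar_field true).
Notation C := (scalar_field true).

Let rscal (r : R) (x : X) : X := vscal (of_real true r) x.
Let iu : C := (0, 1).

Lemma real_part_norming (v : X) : exists f : X -> R,
  (forall x y, f (vadd x y) = f x + f y) /\ (forall r x, f (rscal r x) = r * f x) /\
  (forall x, Rabs (f x) <= vnorm x) /\ f v = vnorm v.
Proof.
assert (rscal_assoc : forall a b x, rscal a (rscal b x) = rscal (a * b) x).
{ intros. unfold rscal. rewrite vscal_assoc. f_equal. simpl. f_equal; ring. }
assert (rscal_distr_s : forall a b x, rscal (a + b) x = vadd (rscal a x) (rscal b x)).
{ intros. unfold rscal. rewrite <- vscal_distr_s. f_equal. simpl. f_equal; ring. }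
assert (rscal_norm : forall a x, vnorm (rscal a x) = Rabs a * vnorm x).
{ intros. unfold rscal. rewrite vnorm_scal. f_equal. apply (sf_abs_of_real true). }
exact (@hahn_banach_norming X (v0 X) (@vadd _ X) (@vopp _ X) rscal (@vnorm _ X)
  (vadd_assoc X) (vadd_comm X) (vadd_0 X) (vadd_opp X) (vscal_1 X) rscal_assoc
  (fun a => vscal_distr_v X (of_real true a)) rscal_distr_s rscal_norm
  (vnorm_triangle X) (vnorm_nonneg X) v).
Qed.

Lemma complexify_linear (f : X -> R) :
  (forall x y, f (vadd x y) = f x + f y) -> (forall r x, f (rscal r x) = r * f x) ->
  linear_fun (fun x => ((f x, - f (vscal iu x)) : C)).
Proof.
intros f_add f_scal.
assert (split_scal : forall (a b : R) (x : X),
  vscal ((a, b) : C) x = vadd (rscal a x) (rscal b (vscal iu x))).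
{ intros. unfold rscal, iu. rewrite vscal_assoc, <- vscal_distr_s. f_equal. simpl. f_equal; ring. }
assert (i_split : forall (a b : R) (x : X),
  vscal iu (vscal ((a, b) : C) x) = vadd (rscal (- b) x) (rscal a (vscal iu x))).
{ intros. unfold rscal, iu. rewrite !vscal_assoc, <- (vscal_distr_s X (- b, 0)).
  f_equal. simpl. f_equal; ring. }
split.
- intros x y. simpl. rewrite vscal_distr_v, !f_add. f_equal. ring.
- intros [a b] x. rewrite i_split, split_scal, !f_add, !f_scal. simpl. f_equal; ring.
Qed.

Lemma vnorm_iu (x : X) : vnorm (vscal iu x) = vnorm x.
Proof.
rewrite vnorm_scal. replace (sabs C iu) with 1; [ring|].
simpl. match goal with |- 1 = sqrt ?a => replace a with 1 by ring end. symmetry. apply sqrt_1.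
Qed.

Lemma complex_separating_functional (v : X) :
  v <> v0 X -> exists phi : X -> C,
    linear_fun phi /\ continuous_fun phi /\ 0 < sabs _ (phi v).
Proof.
intro nv. destruct (real_part_norming v) as [f [f_add [f_scal [f_bound f_v]]]].
assert (lin := complexify_linear f f_add f_scal).
exists (fun x => (f x, - f (vscal iu x))). split; [exact lin|split].
- apply (bounded_linear_continuous X _ 2 lin). intro x.
  eapply Rle_trans; [apply complex_abs_le|]. rewrite Rabs_Ropp, <- Rplus_diag.
  apply Rplus_le_compat; [|rewrite <- (vnorm_iu x)]; apply f_bound.
- apply complex_abs_pos. rewrite f_v.
  destruct (vnorm_nonneg _ v) as [H|H]; [exact H|].
  exfalso. apply nv, vnorm_eq0. auto.
Qed.
End ComplexFunctional.

Lemma separating_functional (k : bool) (X : Banach (scalar_field k)) (v : X) :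
  v <> v0 X -> exists phi : X -> scalar_field k,
    linear_fun phi /\ continuous_fun phi /\ 0 < sabs _ (phi v).
Proof. destruct k; [apply complex_separating_functional | apply real_separating_functional]. Qed.

Lemma Rpower_gt_0 x y : 0 < Rpower x y.
Proof. apply exp_pos. Qed.

Lemma Rpower_1_base y : Rpower 1 y = 1.
Proof. unfold Rpower. rewrite ln_1, Rmult_0_r. apply exp_0. Qed.

Lemma rpow_nonneg x q : 0 <= rpow x q.
Proof. unfold rpow. destruct (Rlt_dec 0 x); [left; apply Rpower_gt_0 | lra]. Qed.

Lemma rpow_pos x q : 0 < x -> rpow x q = Rpower x q.
Proof. intro H. unfold rpow. destruct (Rlt_dec 0 x); [auto | lra]. Qed.

Lemma rpow_0 q : rpow 0 q = 0.
Proof. unfold rpow. destruct (Rlt_dec 0 0); [lra | auto]. Qed.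

Lemma rpow_le a b q : 0 < q -> 0 <= a <= b -> rpow a q <= rpow b q.
Proof.
intros Hq [[Ha|Ha] Hb].
- rewrite !rpow_pos by lra. apply Rle_Rpower_l; lra.
- subst. rewrite rpow_0. apply rpow_nonneg.
Qed.

Lemma rpow_le_inv a b q : 0 < q -> 0 <= a -> 0 < b -> rpow a q <= rpow b q -> a <= b.
Proof.
intros Hq Ha Hb H. destruct (Rle_lt_dec a b) as [|Hba]; auto.
rewrite !rpow_pos in H by lra. assert (Rpower b q < Rpower a q) by (apply Rlt_Rpower_l; lra). lra.
Qed.

Lemma rpow_mul a b q : 0 <= a -> 0 <= b -> rpow (a * b) q = rpow a q * rpow b q.
Proof.
intros [Ha|Ha] [Hb|Hb]; try (subst; rewrite ?Rmult_0_r, ?Rmult_0_l, rpow_0; ring).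
rewrite !rpow_pos by nra. symmetry. apply Rpower_mult_distr; auto.
Qed.

Lemma rpow_add a b q : 0 < q -> 0 <= a -> 0 <= b ->
  rpow (a + b) q <= Rpower 2 q * (rpow a q + rpow b q).
Proof.
intros Hq Ha Hb.
assert (two : rpow 2 q = Rpower 2 q) by (apply rpow_pos; lra).
assert (P2 : 0 < Rpower 2 q) by apply Rpower_gt_0.
assert (na := rpow_nonneg a q). assert (nb := rpow_nonneg b q).
destruct (Rle_dec a b).
- apply Rle_trans with (rpow (2 * b) q); [apply rpow_le; lra|].
  rewrite rpow_mul, two by lra. nra.
- apply Rle_trans with (rpow (2 * a) q); [apply rpow_le; lra|].
  rewrite rpow_mul, two by lra. nra.
Qed.

Lemma psum_nonneg f N : (forall i, 0 <= f i) -> 0 <= psum f N.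
Proof. intro H. induction N; simpl; [lra|]. specialize (H N). lra. Qed.

Lemma psum_le f g N : (forall i, (i < N)%nat -> f i <= g i) -> psum f N <= psum g N.
Proof.
intro H. induction N; simpl; [lra|].
assert (f N <= g N) by (apply H; lia).
assert (psum f N <= psum g N) by (apply IHN; intros; apply H; lia). lra.
Qed.

Lemma psum_ext f g N : (forall i, (i < N)%nat -> f i = g i) -> psum f N = psum g N.
Proof.
intro H. induction N; simpl; auto.
rewrite IHN; [rewrite H; auto | intros; apply H]; lia.
Qed.

Lemma psum_scal c f N : psum (fun i => c * f i) N = c * psum f N.
Proof. induction N; simpl; [ring|]. rewrite IHN. ring. Qed.

Lemma psum_plus f g N : psum (fun i => f i + g i) N = psum f N + psum g N.
Proof. induction N; simpl; [ring|]. rewrite IHN. ring. Qed.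

Lemma psum_split f a b : psum f (a + b) = psum f a + psum (fun i => f (a + i)%nat) b.
Proof.
induction b; simpl.
- rewrite Nat.add_0_r. ring.
- rewrite Nat.add_succ_r. simpl. rewrite IHb. ring.
Qed.

Lemma psum_mono f a b : (forall i, 0 <= f i) -> (a <= b)%nat -> psum f a <= psum f b.
Proof.
intros H Hab. replace b with (a + (b - a))%nat by lia. rewrite psum_split.
assert (0 <= psum (fun i => f (a + i)%nat) (b - a)) by (apply psum_nonneg; auto). lra.
Qed.

Lemma psum_term f j N : (forall i, 0 <= f i) -> (j < N)%nat -> f j <= psum f N.
Proof.
intros H Hj. apply Rle_trans with (psum f (S j)).
- simpl. assert (0 <= psum f j) by (apply psum_nonneg; auto). lra.
- apply psum_mono; auto.
Qed.

Lemma psum_drop_term f j M : (j < M)%nat ->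
  psum (fun i => if Nat.eq_dec i j then 0 else f i) M = psum f M - f j.
Proof.
induction M; intro H; [lia|]. simpl.
destruct (Nat.eq_dec M j) as [->|].
- rewrite (psum_ext _ f); [ring|]. intros i Hi. destruct (Nat.eq_dec i j); [lia | auto].
- rewrite IHM by lia. ring.
Qed.

Lemma psum_reindex_le N : forall (f : nat -> R) (h : nat -> nat) M, (forall i, 0 <= f i) ->
  (forall i, (i < N)%nat -> (h i < M)%nat) ->
  (forall i j, (i < N)%nat -> (j < N)%nat -> h i = h j -> i = j) ->
  psum (fun i => f (h i)) N <= psum f M.
Proof.
induction N; intros f h M Hf Hb Hi; simpl; [apply psum_nonneg; auto|].
(* remove the term f (h N) and apply the induction hypothesis *)
set (f' := fun i => if Nat.eq_dec i (h N) then 0 else f i).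
assert (E : psum (fun i => f (h i)) N = psum (fun i => f' (h i)) N).
{ apply psum_ext. intros i Hi'. unfold f'. destruct (Nat.eq_dec (h i) (h N)); auto.
  assert (i = N) by (apply Hi; auto; lia). lia. }
assert (IH : psum (fun i => f' (h i)) N <= psum f' M).
{ apply IHN.
  - intro i. unfold f'. destruct (Nat.eq_dec i (h N)); [lra | auto].
  - intros; apply Hb; lia.
  - intros; apply Hi; lia || auto. }
assert (Z := psum_drop_term f (h N) M (Hb N (Nat.lt_succ_diag_r N))).
fold f' in Z. lra.
Qed.

Lemma finite_image_bound (h : nat -> nat) N : exists M, forall i, (i < N)%nat -> (h i < M)%nat.
Proof.
induction N as [|N [M HM]]; [exists O; intros; lia|].
exists (Nat.max M (S (h N))). intros i Hi.
destruct (Nat.eq_dec i N); [subst; lia | specialize (HM i); lia].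
Qed.

Lemma psum_box (f g : nat -> R) N A : (N > 0)%nat ->
  psum (fun j => f (j / N)%nat * g (j mod N)%nat) (A * N) = psum f A * psum g N.
Proof.
intro HN. induction A; [simpl; ring|].
replace (S A * N)%nat with (A * N + N)%nat by lia. rewrite psum_split, IHA. simpl psum.
rewrite (psum_ext (fun i => f ((A * N + i) / N)%nat * g ((A * N + i) mod N)%nat)
  (fun i => f A * g i) N).
- rewrite psum_scal. ring.
- intros i Hi. f_equal; f_equal.
  + symmetry. apply Nat.div_unique with i; lia.
  + symmetry. apply Nat.mod_unique with A; lia.
Qed.

Lemma cantor_of_nat_le j : (fst (Cantor.of_nat j) <= j)%nat /\ (snd (Cantor.of_nat j) <= j)%nat.
Proof.
assert (H := Cantor.to_nat_non_decreasing (fst (Cantor.of_nat j)) (snd (Cantor.of_nat j))).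
rewrite <- surjective_pairing, Cantor.cancel_to_of in H. lia.
Qed.

Lemma cantor_to_nat_inj a b : Cantor.to_nat a = Cantor.to_nat b -> a = b.
Proof. intro H. rewrite <- (Cantor.cancel_of_to a), <- (Cantor.cancel_of_to b), H. auto. Qed.

Lemma cantor_of_nat_inj i j : Cantor.of_nat i = Cantor.of_nat j -> i = j.
Proof. intro H. rewrite <- (Cantor.cancel_to_of i), <- (Cantor.cancel_to_of j), H. auto. Qed.

Lemma psum_cantor_row (f : nat -> R) (n N : nat) : (forall i, 0 <= f i) ->
  exists M, psum (fun m => f (Cantor.to_nat (n, m))) N <= psum f M.
Proof.
intro Hf. destruct (finite_image_bound (fun m => Cantor.to_nat (n, m)) N) as [M HM].
exists M. apply (psum_reindex_le N f (fun m => Cantor.to_nat (n, m)) M Hf HM).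
intros i j _ _ E. apply cantor_to_nat_inj in E. injection E; auto.
Qed.

Lemma psum_cantor_column (f : nat -> R) (N : nat) : (forall i, 0 <= f i) ->
  exists M, psum (fun n => f (Cantor.to_nat (n, 0%nat))) N <= psum f M.
Proof.
intro Hf. destruct (finite_image_bound (fun n => Cantor.to_nat (n, 0%nat)) N) as [M HM].
exists M. apply (psum_reindex_le N f (fun n => Cantor.to_nat (n, 0%nat)) M Hf HM).
intros i j _ _ E. apply cantor_to_nat_inj in E. injection E; auto.
Qed.

Lemma psum_cantor_product (f g : nat -> R) N :
  (forall i, 0 <= f i) -> (forall i, 0 <= g i) ->
  psum (fun j => f (fst (Cantor.of_nat j)) * g (snd (Cantor.of_nat j))) N <= psum f N * psum g N.
Proof.
intros Hf Hg. destruct (Nat.eq_dec N 0) as [->|HN]; [simpl; lra|].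
set (F := fun i => f (i / N)%nat * g (i mod N)%nat).
set (h := fun j => (fst (Cantor.of_nat j) * N + snd (Cantor.of_nat j))%nat).
(* h places the pair of j in the N-by-N box *)
assert (h_div : forall j, (j < N)%nat -> (h j / N)%nat = fst (Cantor.of_nat j)).
{ intros j Hj. destruct (cantor_of_nat_le j). symmetry.
  apply Nat.div_unique with (snd (Cantor.of_nat j)); unfold h; lia. }
assert (h_mod : forall j, (j < N)%nat -> (h j mod N)%nat = snd (Cantor.of_nat j)).
{ intros j Hj. destruct (cantor_of_nat_le j). symmetry.
  apply Nat.mod_unique with (fst (Cantor.of_nat j)); unfold h; lia. }
rewrite (psum_ext _ (fun j => F (h j))) by (intros j Hj; unfold F; rewrite h_div, h_mod; auto).
rewrite <- psum_box by lia. apply psum_reindex_le.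
- intro i. unfold F. apply Rmult_le_pos; auto.
- intros j Hj. destruct (cantor_of_nat_le j). unfold h. nia.
- intros i j Hi Hj Hij. apply cantor_of_nat_inj.
  rewrite (surjective_pairing (Cantor.of_nat i)), (surjective_pairing (Cantor.of_nat j)).
  rewrite <- (h_div i), <- (h_div j), <- (h_mod i), <- (h_mod j), Hij by auto. auto.
Qed.

(** * The series sum (m+1)^(-s) *)

Lemma ln_quotient x y : 0 < x -> 0 < y -> ln (x / y) = ln x - ln y.
Proof.
intros Hx Hy. unfold Rdiv. rewrite ln_mult, ln_Rinv; [ring | auto | auto | apply Rinv_0_lt_compat; auto].
Qed.

Lemma ln_le_sub1 y : 0 < y -> ln y <= y - 1.
Proof. intro H. assert (E := exp_ineq1_le (ln y)). rewrite exp_ln in E by auto. lra. Qed.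

(** Comparison of a term of the series with a difference of consecutive
    values of x^(-t), the discrete analogue of integrating x^(-t-1). *)
Lemma power_term_telescope x t : 1 <= x -> 0 < t ->
  Rpower (x + 1) (- (t + 1)) <= (Rpower x (- t) - Rpower (x + 1) (- t)) / t.
Proof.
intros Hx Ht. unfold Rpower.
set (A := ln x). set (B := ln (x + 1)).
assert (BA : / (x + 1) <= B - A).
{ assert (L := ln_le_sub1 (x / (x + 1)) ltac:(apply Rdiv_lt_0_compat; lra)).
  rewrite ln_quotient in L by lra.
  replace (x / (x + 1) - 1) with (- / (x + 1)) in L by (field; lra). unfold A, B. lra. }
assert (E1 : exp (- t * A) = exp (- t * B) * exp (t * (B - A))).
{ rewrite <- exp_plus. f_equal. ring. }
assert (E2 : exp (- (t + 1) * B) = exp (- t * B) * / (x + 1)).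
{ replace (- (t + 1) * B) with (- t * B + - B) by ring. rewrite exp_plus. f_equal.
  unfold B. rewrite exp_Ropp, exp_ln; lra. }
rewrite E1, E2.
assert (Ex := exp_ineq1_le (t * (B - A))).
assert (P := exp_pos (- t * B)).
apply Rmult_le_reg_l with t; auto.
replace (t * ((exp (- t * B) * exp (t * (B - A)) - exp (- t * B)) / t)) with
  (exp (- t * B) * (exp (t * (B - A)) - 1)) by (field; lra).
apply Rle_trans with (exp (- t * B) * (t * (B - A))).
- replace (t * (exp (- t * B) * / (x + 1))) with (exp (- t * B) * (t * / (x + 1))) by ring.
  apply Rmult_le_compat_l; [lra|]. apply Rmult_le_compat_l; lra.
- apply Rmult_le_compat_l; lra.
Qed.

Lemma zeta_bound s : 1 < s -> forall N,
  psum (fun m => Rpower (INR m + 1) (- s)) N <= 1 + / (s - 1).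
Proof.
intros Hs.
set (t := s - 1). assert (Ht : 0 < t) by (unfold t; lra).
assert (telescoped : forall N, (1 <= N)%nat ->
  psum (fun m => Rpower (INR m + 1) (- s)) N <= 1 + (1 - Rpower (INR N) (- t)) / t).
{ induction N as [|N IHN]; intro HN; [lia|].
  destruct (Nat.eq_dec N 0) as [->|].
  - simpl psum. change (INR 1) with 1. change (INR 0) with 0.
    rewrite !Rplus_0_l, !Rpower_1_base. replace ((1 - 1) / t) with 0 by (unfold Rdiv; ring). lra.
  - assert (IH := IHN ltac:(lia)). simpl psum. rewrite S_INR.
    assert (K := power_term_telescope (INR N) t ltac:(apply (le_INR 1); lia) Ht).
    replace (- (t + 1)) with (- s) in K by (unfold t; ring).
    assert (E : 1 + (1 - Rpower (INR N) (- t)) / t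
              + (Rpower (INR N) (- t) - Rpower (INR N + 1) (- t)) / t
              = 1 + (1 - Rpower (INR N + 1) (- t)) / t) by (field; lra).
    lra. }
intros [|N].
- simpl psum. assert (0 < / t) by (apply Rinv_0_lt_compat; lra). fold t. lra.
- assert (H := telescoped (S N) ltac:(lia)).
  assert (P := Rpower_gt_0 (INR (S N)) (- t)).
  assert ((1 - Rpower (INR (S N)) (- t)) / t <= / t).
  { unfold Rdiv. rewrite <- (Rmult_1_l (/ t)) at 2.
    apply Rmult_le_compat_r; [left; apply Rinv_0_lt_compat|]; lra. }
  fold t. lra.
Qed.

Lemma harmonic_ln N : ln (INR N + 1) <= psum (fun m => / (INR m + 1)) N.
Proof.
induction N; simpl psum; [rewrite Rplus_0_l, ln_1; lra|].
rewrite S_INR.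
assert (P : 0 < INR N + 1) by (assert (0 <= INR N) by apply pos_INR; lra).
assert (L := ln_le_sub1 ((INR N + 1 + 1) / (INR N + 1)) ltac:(apply Rdiv_lt_0_compat; lra)).
rewrite ln_quotient in L by lra.
replace ((INR N + 1 + 1) / (INR N + 1) - 1) with (/ (INR N + 1)) in L by (field; lra).
lra.
Qed.

Lemma harmonic_unbounded c M : 0 < c -> exists N, M < c * psum (fun m => / (INR m + 1)) N.
Proof.
intro Hc.
destruct (INR_archimed 1 (exp (M / c)) ltac:(lra)) as [N HN].
exists N. assert (H := harmonic_ln N).
assert (M / c < ln (INR N + 1)).
{ rewrite <- (ln_exp (M / c)). apply ln_increasing; [apply exp_pos | lra]. }
apply Rmult_lt_compat_l with (r := c) in H0; auto.
replace (c * (M / c)) with M in H0 by (field; lra). nra.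
Qed.

Section HamelBases.
Context {k : bool} (X : Banach (scalar_field k)).
Notation K := (scalar_field k).

Lemma lin_comb_app (A B : list (K * X)) : lin_comb (A ++ B) = vadd (lin_comb A) (lin_comb B).
Proof. induction A; simpl; [symmetry; apply vadd_0l | rewrite IHA; apply vadd_assoc]. Qed.

Lemma vscal_lin_comb {A : Type} c (l : list A) (u : A -> K) (w : A -> X) :
  vscal c (lin_comb (map (fun z => (u z, w z)) l)) = lin_comb (map (fun z => (u z, vscal c (w z))) l).
Proof.
induction l; simpl; [apply vscal_v0|].
rewrite vscal_distr_v, IHl, !vscal_assoc, sf_mul_comm. auto.
Qed.

Lemma lin_comb_scale_coeffs {A : Type} c (l : list A) (u : A -> K) (w : A -> X) :
  lin_comb (map (fun z => (smul K c (u z), w z)) l) = vscal c (lin_comb (map (fun z => (u z, w z)) l)).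
Proof.
induction l; simpl; [symmetry; apply vscal_v0|].
rewrite vscal_distr_v, IHl, !vscal_assoc. auto.
Qed.

Lemma seq_lin_comb_middle (l1 l2 : list (K * (nat -> X))) a s :
  seq_lin_comb (l1 ++ (a, s) :: l2) = add_seq (scal_seq a s) (seq_lin_comb (l1 ++ l2)).
Proof.
apply functional_extensionality. intro j. unfold seq_lin_comb, add_seq, scal_seq.
rewrite !map_app, !lin_comb_app. simpl.
rewrite !vadd_assoc, (vadd_comm _ (lin_comb _) (vscal a (s j))). auto.
Qed.

Lemma seq_lin_comb_scale_coeffs c (l : list (K * (nat -> X))) :
  seq_lin_comb (map (fun pr => (smul K c (fst pr), snd pr)) l) = scal_seq c (seq_lin_comb l).
Proof.
apply functional_extensionality. intro j. unfold seq_lin_comb, scal_seq.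
rewrite map_map. apply (lin_comb_scale_coeffs c l fst (fun pr => snd pr j)).
Qed.

Lemma vscal_solve a ai (x w : X) :
  smul K ai a = s1 K -> vadd (vscal a x) w = v0 X -> x = vscal (smul K ai (sopp K (s1 K))) w.
Proof.
intros Hai E. rewrite vadd_comm in E. apply vopp_unique in E.
rewrite <- vscal_assoc, <- vopp_scal, <- E, vscal_assoc, Hai. symmetry. apply vscal_1.
Qed.

Definition in_span (M : (nat -> X) -> Prop) (s : nat -> X) : Prop :=
  exists l, Forall (fun pr => M (snd pr)) l /\ s = seq_lin_comb l.

Lemma Forall_avoid (M : (nat -> X) -> Prop) s (l : list (K * (nat -> X))) :
  Forall (fun pr => M (snd pr) \/ snd pr = s) l -> ~ In s (map snd l) ->
  Forall (fun pr => M (snd pr)) l.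
Proof.
rewrite !Forall_forall. intros Hl nin pr Hpr.
destruct (Hl pr Hpr) as [|E]; auto. exfalso. apply nin. rewrite <- E. apply in_map; auto.
Qed.

Lemma lin_indep_extend (M : (nat -> X) -> Prop) (s : nat -> X) :
  lin_indep M -> ~ in_span M s -> lin_indep (fun b => M b \/ b = s).
Proof.
intros Mli nspan l nd fa comb.
destruct (classic (In s (map snd l))) as [Hin|Hnin];
  [|apply Mli; [exact nd | apply Forall_avoid with s; auto | exact comb]].
apply in_map_iff in Hin. destruct Hin as [[a s'] [Es Hpr]]. simpl in Es. subst s'.
apply in_split in Hpr. destruct Hpr as [l1 [l2 ->]].
rewrite map_app in nd. simpl in nd.
assert (nd' := NoDup_remove_1 _ _ _ nd). assert (nin := NoDup_remove_2 _ _ _ nd).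
rewrite <- map_app in nd', nin.
assert (fa12 : Forall (fun pr => M (snd pr)) (l1 ++ l2)).
{ apply Forall_avoid with s; auto.
  apply Forall_app in fa. destruct fa as [fa1 fa2]. inversion fa2. apply Forall_app; auto. }
rewrite seq_lin_comb_middle in comb.
destruct (classic (a = s0 K)) as [->|an0].
- (* the coefficient of s vanishes, so the others do by independence of M *)
  assert (comb12 : seq_lin_comb (l1 ++ l2) = zero_seq).
  { rewrite <- comb. apply functional_extensionality. intro j.
    unfold add_seq, scal_seq. rewrite vscal_0, vadd_0l. auto. }
  assert (Z := Mli _ nd' fa12 comb12). apply Forall_app in Z. destruct Z.
  apply Forall_app. auto.
- (* otherwise s lies in the span of M *)
  exfalso. apply nspan. destruct (sf_inv k a an0) as [ai Hai].
  set (c := smul K ai (sopp K (s1 K))).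
  exists (map (fun pr => (smul K c (fst pr), snd pr)) (l1 ++ l2)). split.
  + apply Forall_map. exact fa12.
  + rewrite seq_lin_comb_scale_coeffs. apply functional_extensionality. intro j.
    apply (vscal_solve a ai); auto. exact (f_equal (fun y => y j) comb).
Qed.

Lemma lin_indep_chain_union (F : ((nat -> X) -> Prop) -> Prop) :
  (forall A, F A -> lin_indep A) ->
  (forall A B, F A -> F B -> (forall z, A z -> B z) \/ (forall z, B z -> A z)) ->
  lin_indep (fun z => exists2 A, F A & A z).
Proof.
intros HF Hchain l nd fa comb.
assert (common : l = nil \/ exists A, F A /\ Forall (fun pr => A (snd pr)) l).
{ clear nd comb. induction l as [|pr l IH]; [left; auto|right].
  inversion fa as [|? ? [A1 FA1 A1a] fa']; subst.
  destruct (IH fa') as [->|[A [FA HA]]]; [exists A1; auto|].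
  destruct (Hchain A1 A FA1 FA) as [s|s].
  - exists A. split; auto.
  - exists A1. split; auto. constructor; auto. eapply Forall_impl; [|exact HA]. auto. }
destruct common as [->|[A [FA HA]]]; [constructor|].
apply (HF A FA); auto.
Qed.

Lemma hamel_basis_exists (S : (nat -> X) -> Prop) : exists B, hamel_basis B S.
Proof.
set (P := fun B : (nat -> X) -> Prop => (forall b, B b -> S b) /\ lin_indep B).
destruct (zorn_sets (nat -> X) P) as [M [[MS Mli] Mmax]].
{ intros F HF Hchain. split.
  - intros b [A FA Ab]. apply (HF A FA); auto.
  - apply lin_indep_chain_union; auto. intros A FA. apply (HF A FA). }
exists M. split; [|split]; auto.
intros s Ss. apply NNPP. intro nspan.
assert (Ms : M s).
{ apply (Mmax (fun b => M b \/ b = s)); auto.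
  split; [intros b [Mb| ->]; auto | apply lin_indep_extend; auto]. }
apply nspan. exists ((s1 K, s) :: nil). split; [constructor; auto|].
apply functional_extensionality. intro j. unfold seq_lin_comb. simpl. rewrite vadd_0, vscal_1. auto.
Qed.
End HamelBases.

(** * The weights c_m = (m+1)^(-1/p) *)

Definition weight (p : R) (m : nat) : R := Rpower (INR m + 1) (- / p).

Section Weight.
Variable p : R.
Hypothesis Hp : 0 < p.

Lemma weight_pos m : 0 < weight p m.
Proof. apply Rpower_gt_0. Qed.

Lemma weight_0 : weight p 0 = 1.
Proof. unfold weight. simpl. rewrite Rplus_0_l. apply Rpower_1_base. Qed.

Lemma weight_le_1 m : weight p m <= 1.
Proof.
unfold weight. assert (0 <= INR m) by apply pos_INR.
apply Rle_trans with (Rpower (INR m + 1) 0); [|rewrite Rpower_O; lra].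
apply Rle_Rpower; [lra|]. assert (0 < / p) by (apply Rinv_0_lt_compat; lra). lra.
Qed.

Lemma weight_rpow q m : rpow (weight p m) q = Rpower (INR m + 1) (- (q / p)).
Proof.
rewrite rpow_pos by apply weight_pos. unfold weight. rewrite Rpower_mult. f_equal. field. lra.
Qed.

(** (c_m) is not in l_p: c_m^p = 1/(m+1) ... *)
Lemma weight_rpow_p m : rpow (weight p m) p = / (INR m + 1).
Proof.
rewrite weight_rpow. replace (p / p) with 1 by (field; lra).
rewrite Rpower_Ropp, Rpower_1; auto. assert (0 <= INR m) by apply pos_INR. lra.
Qed.

(** ... but it lies in l_q for every q > p. *)
Lemma weight_summable q : p < q ->
  forall N, psum (fun m => rpow (weight p m) q) N <= 1 + / (q / p - 1).
Proof.
intros Hq N. rewrite (psum_ext _ (fun m => Rpower (INR m + 1) (- (q / p)))).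
- apply zeta_bound. apply Rmult_lt_reg_r with p; auto. unfold Rdiv. rewrite Rmult_assoc, Rinv_l; lra.
- intros. apply weight_rpow.
Qed.
End Weight.

(** * The embedding T of l_p^+(X) into itself and its image W *)

Section Embedding.
Context {k : bool} (X : Banach (scalar_field k)).
Variable p : R.
Hypothesis Hp : 0 < p.

(** (T x)_(n,m) = c_m x_n, with (n,m) coded by the Cantor pairing. *)
Definition embed (x : nat -> X) : nat -> X :=
  fun j => vscal (of_real k (weight p (snd (Cantor.of_nat j)))) (x (fst (Cantor.of_nat j))).

Definition first_column (y : nat -> X) : nat -> X := fun n => y (Cantor.to_nat (n, 0%nat)).

Lemma embed_at x n m : embed x (Cantor.to_nat (n, m)) = vscal (of_real k (weight p m)) (x n).
Proof. unfold embed. rewrite Cantor.cancel_of_to. auto. Qed.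

Lemma first_column_embed x : first_column (embed x) = x.
Proof.
apply functional_extensionality. intro n. unfold first_column.
rewrite embed_at, weight_0, sf_of_real_1. apply vscal_1.
Qed.

Lemma embed_lin_comb l :
  embed (seq_lin_comb l) = seq_lin_comb (map (fun pr => (fst pr, embed (snd pr))) l).
Proof.
apply functional_extensionality. intro j. unfold embed at 1, seq_lin_comb.
rewrite map_map, vscal_lin_comb. auto.
Qed.

Lemma first_column_lin_comb l :
  first_column (seq_lin_comb l) = seq_lin_comb (map (fun pr => (fst pr, first_column (snd pr))) l).
Proof.
apply functional_extensionality. intro n. unfold first_column at 1, seq_lin_comb. rewrite map_map. auto.
Qed.

Lemma lpplus_zero : lpplus p (@zero_seq _ X).
Proof.
intros q Hq. exists 0. intro N. unfold zero_seq. rewrite vnorm_0, rpow_0.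
induction N; simpl; lra.
Qed.

Lemma lpplus_add (x y : nat -> X) : lpplus p x -> lpplus p y -> lpplus p (add_seq x y).
Proof.
intros Hx Hy q Hq. destruct (Hx q Hq) as [Mx HMx]. destruct (Hy q Hq) as [My HMy].
exists (Rpower 2 q * (Mx + My)). intro N.
apply Rle_trans with (psum (fun n => Rpower 2 q * (rpow (vnorm (x n)) q + rpow (vnorm (y n)) q)) N).
- apply psum_le. intros i _. unfold add_seq.
  apply Rle_trans with (rpow (vnorm (x i) + vnorm (y i)) q).
  + apply rpow_le; [lra|]. split; [apply vnorm_nonneg | apply vnorm_triangle].
  + apply rpow_add; [lra | apply vnorm_nonneg | apply vnorm_nonneg].
- rewrite psum_scal, psum_plus. apply Rmult_le_compat_l; [left; apply Rpower_gt_0|].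
  specialize (HMx N). specialize (HMy N). lra.
Qed.

Lemma lpplus_scal a (x : nat -> X) : lpplus p x -> lpplus p (scal_seq a x).
Proof.
intros Hx q Hq. destruct (Hx q Hq) as [Mx HMx].
exists (rpow (sabs _ a) q * Mx). intro N.
rewrite (psum_ext _ (fun n => rpow (sabs _ a) q * rpow (vnorm (x n)) q)).
- rewrite psum_scal. apply Rmult_le_compat_l; [apply rpow_nonneg | auto].
- intros i _. unfold scal_seq. rewrite vnorm_scal.
  apply rpow_mul; [apply sf_abs_nonneg | apply vnorm_nonneg].
Qed.

Lemma lpplus_first_column (y : nat -> X) : lpplus p y -> lpplus p (first_column y).
Proof.
intros Hy q Hq. destruct (Hy q Hq) as [My HMy]. exists My. intro N.
destruct (psum_cantor_column (fun i => rpow (vnorm (y i)) q) N) as [M HM]; [intro; apply rpow_nonneg|].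
eapply Rle_trans; [exact HM | apply HMy].
Qed.

(** ||T x||_q <= ||x||_q ||c||_q, hence T maps l_p^+(X) into itself. *)
Lemma lpplus_embed (x : nat -> X) : lpplus p x -> lpplus p (embed x).
Proof.
intros Hx q Hq. destruct (Hx q Hq) as [Mx HMx].
set (f := fun n => rpow (vnorm (x n)) q).
set (g := fun m => rpow (weight p m) q).
assert (Hg : forall N, psum g N <= 1 + / (q / p - 1)) by (apply weight_summable; auto).
assert (fnn : forall i, 0 <= f i) by (intro; apply rpow_nonneg).
assert (gnn : forall i, 0 <= g i) by (intro; apply rpow_nonneg).
exists (Mx * (1 + / (q / p - 1))). intro N.
rewrite (psum_ext _ (fun j => f (fst (Cantor.of_nat j)) * g (snd (Cantor.of_nat j)))).
- eapply Rle_trans; [exact (psum_cantor_product f g N fnn gnn)|].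
  apply Rmult_le_compat; try apply psum_nonneg; auto.
- intros j _. unfold embed, f, g.
  rewrite vnorm_scal, sf_abs_of_real, Rabs_right by (left; apply weight_pos).
  rewrite rpow_mul by (apply vnorm_nonneg || (left; apply weight_pos)). ring.
Qed.

Definition embedded_space (y : nat -> X) : Prop := exists x, lpplus p x /\ y = embed x.

Lemma embedded_space_lpplus y : embedded_space y -> lpplus p y.
Proof. intros [x [Hx ->]]. apply lpplus_embed; auto. Qed.

Lemma embedded_space_subspace : subspace embedded_space.
Proof.
split; [|split].
- exists zero_seq. split; [apply lpplus_zero|].
  apply functional_extensionality. intro j. unfold embed, zero_seq. symmetry. apply vscal_v0.
- intros x y [x' [Hx ->]] [y' [Hy ->]]. exists (add_seq x' y'). split; [apply lpplus_add; auto|].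
  apply functional_extensionality. intro j. unfold embed, add_seq. symmetry. apply vscal_distr_v.
- intros a x [x' [Hx ->]]. exists (scal_seq a x'). split; [apply lpplus_scal; auto|].
  apply functional_extensionality. intro j. unfold embed, scal_seq.
  rewrite !vscal_assoc, sf_mul_comm. auto.
Qed.

Lemma embedded_space_iff y : embedded_space y <-> lpplus p y /\
  forall n m, y (Cantor.to_nat (n, m)) = vscal (of_real k (weight p m)) (y (Cantor.to_nat (n, 0%nat))).
Proof.
split.
- intro Wy. split; [apply embedded_space_lpplus; auto|].
  destruct Wy as [x [_ ->]]. intros n m. rewrite !embed_at, weight_0, sf_of_real_1, vscal_1. auto.
- intros [Hy Hrel]. exists (first_column y). split; [apply lpplus_first_column; auto|].
  apply functional_extensionality. intro j.
  rewrite <- (Cantor.cancel_to_of j) at 1. rewrite (surjective_pairing (Cantor.of_nat j)), Hrel. auto.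
Qed.

Lemma ball_controls_coordinates (x y : nat -> X) q d : 0 < q -> 0 < d ->
  (forall N, psum (fun n => rpow (vnorm (vsub (y n) (x n))) q) N <= Rpower d q) ->
  forall j, vnorm (vsub (y j) (x j)) <= d.
Proof.
intros Hq Hd Hball j. apply rpow_le_inv with q; [lra | apply vnorm_nonneg | lra |].
rewrite (rpow_pos d) by lra. eapply Rle_trans; [|apply (Hball (S j))].
apply (psum_term (fun n => rpow (vnorm (vsub (y n) (x n))) q) j (S j)); [intro; apply rpow_nonneg | lia].
Qed.

(** W is closed: a point violating one coordinate relation by d > 0 has a
    ||.||_(p+1)-ball of radius d/3 outside W, since c_m <= 1. *)
Lemma embedded_space_closed : lpplus_closed p embedded_space.
Proof.
split; [exact embedded_space_lpplus|]. split; [intros x [Hx _]; auto|].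
intros x [Hx nW].
assert (viol : exists n m,
  x (Cantor.to_nat (n, m)) <> vscal (of_real k (weight p m)) (x (Cantor.to_nat (n, 0%nat)))).
{ apply NNPP. intro H. apply nW, embedded_space_iff. split; auto.
  intros n m. apply NNPP. intro H'. apply H. exists n, m. auto. }
destruct viol as [n [m Hne]].
set (j1 := Cantor.to_nat (n, m)) in *. set (j0 := Cantor.to_nat (n, 0%nat)) in *.
set (c := of_real k (weight p m)) in *.
set (d := vnorm (vsub (x j1) (vscal c (x j0)))).
assert (dpos : 0 < d).
{ destruct (vnorm_nonneg _ (vsub (x j1) (vscal c (x j0)))) as [H|H]; auto.
  exfalso. apply Hne, vnorm_sub_eq0. auto. }
exists ((p + 1) :: nil), (Rpower (d / 3) (p + 1)).
split; [repeat constructor; lra|]. split; [apply Rpower_gt_0|].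
intros y Hy Hball. apply Forall_inv in Hball.
assert (close := ball_controls_coordinates x y (p + 1) (d / 3) ltac:(lra) ltac:(lra) Hball).
split; auto. intro Wy. apply embedded_space_iff in Wy. destruct Wy as [_ Hrel].
assert (Hd := vnorm_defect_le X c (x j0) (x j1) (y j0)).
rewrite <- (Hrel n m : y j1 = vscal c (y j0)) in Hd. fold d in Hd.
unfold c in Hd. rewrite sf_abs_of_real, Rabs_right in Hd by (left; apply weight_pos).
assert (weight p m * vnorm (vsub (y j0) (x j0)) <= 1 * (d / 3)).
{ apply Rmult_le_compat;
    [left; apply weight_pos | apply vnorm_nonneg | apply weight_le_1; auto | apply close]. }
assert (close1 := close j1). lra.
Qed.

(** For z <> 0, T z is not weakly p-summable: with z_n <> 0 and phi z_n <> 0,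
    sum_m |phi (c_m z_n)|^p = |phi z_n|^p sum_m 1/(m+1) diverges. *)
Lemma embed_not_weakly_summable (z : nat -> X) : z <> zero_seq -> ~ weakly_summable p (embed z).
Proof.
intro nz. assert (ex : exists n, z n <> v0 X).
{ apply NNPP. intro H. apply nz. apply functional_extensionality. intro n.
  apply NNPP. intro H'. apply H. exists n. auto. }
destruct ex as [n Hn].
destruct (separating_functional k X (z n) Hn) as [phi [[phi_add phi_scal] [cont pos]]].
intro ws. destruct (ws phi (conj phi_add phi_scal) cont) as [B HB].
set (a := sabs _ (phi (z n))) in *.
destruct (harmonic_unbounded (Rpower a p) B (Rpower_gt_0 _ _)) as [N HN].
destruct (psum_cantor_row (fun j => rpow (sabs _ (phi (embed z j))) p) n N) as [M HM];
  [intro; apply rpow_nonneg|].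
rewrite (psum_ext _ (fun m => Rpower a p * / (INR m + 1))), psum_scal in HM.
- specialize (HB M). lra.
- intros m _. rewrite embed_at, phi_scal, sf_abs_mul, sf_abs_of_real.
  rewrite Rabs_right by (left; apply weight_pos).
  fold a. rewrite rpow_mul by (lra || (left; apply weight_pos)).
  rewrite weight_rpow_p, (rpow_pos a) by auto. ring.
Qed.

Lemma embedded_space_avoids_weakly_summable (x : nat -> X) :
  embedded_space x -> (lpplus p x /\ ~ weakly_summable p x) \/ x = zero_seq.
Proof.
intro Wx. destruct (classic (x = zero_seq)) as [|nx]; [right; auto|left].
split; [apply embedded_space_lpplus; auto|].
destruct Wx as [z [_ ->]]. apply embed_not_weakly_summable.
intros ->. apply nx. apply functional_extensionality. intro j. unfold embed, zero_seq. apply vscal_v0.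
Qed.

Lemma embed_hamel_basis (B : (nat -> X) -> Prop) : hamel_basis B (lpplus p) ->
  hamel_basis (fun y => exists b, B b /\ y = embed b) embedded_space.
Proof.
intros [BS [Bli Bspan]]. split; [|split].
- intros y [b [Bb ->]]. exists b. auto.
- intros l nd fa comb.
  assert (col : forall pr, In pr l -> embed (first_column (snd pr)) = snd pr).
  { intros pr Hpr. rewrite Forall_forall in fa. destruct (fa pr Hpr) as [b [_ ->]].
    rewrite first_column_embed. auto. }
  set (l' := map (fun pr => (fst pr, first_column (snd pr))) l).
  assert (Z : Forall (fun pr => fst pr = s0 _) l').
  { apply Bli.
    - unfold l'. rewrite map_map. simpl. rewrite <- (map_map snd first_column).
      apply NoDup_map_NoDup_ForallPairs; auto.
      intros y1 y2 I1 I2 E. apply in_map_iff in I1. apply in_map_iff in I2.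
      destruct I1 as [pr1 [<- P1]]. destruct I2 as [pr2 [<- P2]].
      rewrite <- (col pr1), <- (col pr2), E; auto.
    - unfold l'. apply Forall_map. simpl. rewrite Forall_forall in *. intros pr Hpr.
      destruct (fa pr Hpr) as [b [Bb ->]]. rewrite first_column_embed. auto.
    - unfold l'. rewrite <- first_column_lin_comb, comb. auto. }
  unfold l' in Z. apply Forall_map in Z. exact Z.
- intros w [z [Hz ->]]. destruct (Bspan z Hz) as [l [fa ->]].
  exists (map (fun pr => (fst pr, embed (snd pr))) l). split; [|apply embed_lin_comb].
  apply Forall_map. rewrite Forall_forall in *. intros pr Hpr. exists (snd pr). auto.
Qed.

Lemma embedded_space_same_dim : same_dim embedded_space (lpplus p).
Proof.
destruct (hamel_basis_exists X (lpplus p)) as [B HB].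
exists (fun y => exists b, B b /\ y = embed b), B, first_column.
split; [apply embed_hamel_basis; auto|]. split; [auto|]. split; [|split].
- intros y [b [Bb ->]]. rewrite first_column_embed. auto.
- intros y1 y2 [b1 [_ ->]] [b2 [_ ->]] E. rewrite !first_column_embed in E. subst. auto.
- intros b Bb. exists (embed b). split; [exists b; auto | apply first_column_embed].
Qed.
End Embedding.

Theorem corollary5 (k : bool) (p : R) (X : Banach (scalar_field k)) :
  1 <= p -> infinite_dim X ->
  maximal_spaceable p (fun x : nat -> X => lpplus p x /\ ~ weakly_summable p x).
Proof.
intros Hp _. assert (Hp0 : 0 < p) by lra.
exists (embedded_space X p). split; [|split; [|split]].
- exact (embedded_space_subspace X p Hp0).
- exact (embedded_space_closed X p Hp0).
- exact (embedded_space_avoids_weakly_summable X p Hp0).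
- exact (embedded_space_same_dim X p).
Qed.
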